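(* Let $R$ be a commutative ring, $M$ an $R$-module and $(I,N)$ a prime m-ideal of $M$. Then $I=\{r\in R\mid r M\subseteq N\}$.
   Context: An m-ideal of an $R$-module $M$ is a pair $(I,N)$ with $I$ an ideal of $R$ and $N$ a submodule of $M$ such that $I\cdot M\subseteq N$. It is prime if $I$ is a prime (in particular proper) ideal of $R$, $N$ is a proper submodule of $M$, and for all $r\in R$, $m\in M$, $r\cdot m\in N$ implies $r\in I$ or $m\in N$. *)

From HB Require Import structures.
From mathcomp Require Import all_boot all_algebra.
Set Implicit Arguments. Unset Strict Implicit. Unset Printing Implicit Defensive.
Import GRing.Theory.
Local Open Scope ring_scope.

Definition is_ideal (R : comPzRingType) (I : R -> Prop) : Prop :=
  [/\ I 0, (forall x y, I x -> I y -> I (x + y)) & (forall r x, I x -> I (r * x))].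

Definition is_submodule (R : comPzRingType) (M : lmodType R) (N : M -> Prop) : Prop :=
  [/\ N 0, (forall x y, N x -> N y -> N (x + y)) & (forall (r : R) x, N x -> N (r *: x))].

Definition is_prime_ideal (R : comPzRingType) (I : R -> Prop) : Prop :=
  [/\ is_ideal I, ~ I 1 & forall a b, I (a * b) -> I a \/ I b].

Definition is_m_ideal (R : comPzRingType) (M : lmodType R) (I : R -> Prop) (N : M -> Prop) : Prop :=
  [/\ is_ideal I, is_submodule N & forall r m, I r -> N (r *: m)].

Definition is_prime_m_ideal (R : comPzRingType) (M : lmodType R) (I : R -> Prop) (N : M -> Prop) : Prop :=
  [/\ is_m_ideal I N, is_prime_ideal I, (exists m, ~ N m)
    & forall (r : R) (m : M), N (r *: m) -> I r \/ N m].

From HB Require Import structures.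
From mathcomp Require Import all_boot all_algebra.
Local Open Scope ring_scope.

Lemma m_ideal_annihilates (R : comPzRingType) (M : lmodType R)
    (I : R -> Prop) (N : M -> Prop) :
  is_m_ideal I N -> forall r, I r -> forall m, N (r *: m).
Proof. by case=> _ _ IM_N r Ir m; apply: IM_N. Qed.

Lemma prime_m_ideal_annihilator_sub (R : comPzRingType) (M : lmodType R)
    (I : R -> Prop) (N : M -> Prop) :
  (exists m, ~ N m) -> (forall (r : R) (m : M), N (r *: m) -> I r \/ N m) ->
  forall r, (forall m, N (r *: m)) -> I r.
Proof. by move=> [m0 Nm0] prime_IN r rM_N; case: (prime_IN r m0 (rM_N m0)). Qed.

Theorem mainTheorem18 (R : comPzRingType) (M : lmodType R) (I : R -> Prop) (N : M -> Prop) :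
  is_prime_m_ideal I N ->
  forall r : R, I r <-> (forall m : M, N (r *: m)).
Proof.
move=> [mIN _ N_proper prime_IN] r; split.
- exact: m_ideal_annihilates.
- exact: prime_m_ideal_annihilator_sub.
Qed.
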